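(* Let $\textbf{F}$ be a $gH$-differentiable IVF on a nonempty subset $\mathcal{X}$ of $\mathbb{R}^n$. If $\bar{x}\in\mathcal{X}$ is an efficient solution of the problem $\min_{x\in\mathcal{X}}\textbf{F}(x)$, then $0\in D_i\textbf{F}(\bar{x})$ for each $i\in\{1,2,\dots,n\}$.
   Context: $I(\mathbb{R})$: closed bounded intervals $\textbf{A}=[\underline{a},\overline{a}]$ with Moore arithmetic ($\oplus$ endpointwise; $\lambda\odot\textbf{A}=[\lambda\underline{a},\lambda\overline{a}]$ if $\lambda\ge0$, $[\lambda\overline{a},\lambda\underline{a}]$ if $\lambda<0$); $gH$-difference $\textbf{A}\ominus_{gH}\textbf{B}=[\min\{\underline{a}-\underline{b},\overline{a}-\overline{b}\},\max\{\underline{a}-\underline{b},\overline{a}-\overline{b}\}]$; limits in the norm $\max\{|\underline{a}|,|\overline{a}|\}$. $\textbf{A}\prec\textbf{B}$ iff $\underline{a}\le\underline{b}$, $\overline{a}\le\overline{b}$ and $\textbf{A}\ne\textbf{B}$; $\nprec$ is its negation. An IVF is $\textbf{F}(x)=[\underline{f}(x),\overline{f}(x)]$. $D_i\textbf{F}(\bar{x})=\lim_{h\to0}\frac1h\odot(\textbf{F}(\bar{x}+he_i)\ominus_{gH}\textbf{F}(\bar{x}))$. Linear IVF: $\textbf{L}(x)=\bigoplus_i x_i\odot\textbf{L}(e_i)$. $\textbf{F}$ is $gH$-differentiable at $\bar{x}$ if there exist a linear IVF $\textbf{L}_{\bar{x}}$, an IVF $\textbf{E}(\textbf{F}(\bar{x});d)$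 and $\delta>0$ with $(\textbf{F}(\bar{x}+d)\ominus_{gH}\textbf{F}(\bar{x}))\ominus_{gH}\textbf{L}_{\bar{x}}(d)=\lVert d\rVert\odot\textbf{E}(\textbf{F}(\bar{x});d)$ for $\lVert d\rVert<\delta$ and $\textbf{E}\to\textbf{0}$ as $\lVert d\rVert\to0$; on $\mathcal{X}$ means at every point. $\bar{x}$ is an efficient solution of $\min_{x\in\mathcal{X}}\textbf{F}(x)$ if $\textbf{F}(x)\nprec\textbf{F}(\bar{x})$ for all $x\in\mathcal{X}$, $x\ne\bar{x}$. *)

From HB Require Import structures.
From mathcomp Require Import all_boot all_order all_algebra.
From mathcomp Require Import reals.
Set Implicit Arguments. Unset Strict Implicit. Unset Printing Implicit Defensive.
Import Order.TTheory GRing.Theory Num.Theory.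
Local Open Scope ring_scope.

Section IVF.
Variable R : realType.
Variable n : nat.

(* A closed bounded interval [lo, hi]; closedness (lo <= hi) of the values of
   an IVF is imposed as a hypothesis where needed. *)
Record itv := Itv { lo : R; hi : R }.

Definition itv_add (A B : itv) : itv := Itv (lo A + lo B) (hi A + hi B).

Definition itv_scale (l : R) (A : itv) : itv :=
  if 0 <= l then Itv (l * lo A) (l * hi A) else Itv (l * hi A) (l * lo A).

Definition gHdiff (A B : itv) : itv :=
  Itv (Num.min (lo A - lo B) (hi A - hi B)) (Num.max (lo A - lo B) (hi A - hi B)).

Definition itv_norm (A : itv) : R := Num.max `|lo A| `|hi A|.

Definition itv0 : itv := Itv 0 0.

Definition itv_prec (A B : itv) : Prop := lo A <= lo B /\ hi A <= hi B /\ A <> B.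

Definition itv_mem (r : R) (A : itv) : Prop := lo A <= r /\ r <= hi A.

Definition vnorm (d : 'rV[R]_n) : R := Num.sqrt (\sum_(i < n) d 0 i ^+ 2).

Definition unitv (i : 'I_n) : 'rV[R]_n := \row_(j < n) (j == i)%:R.

Definition itv_lim0 (g : R -> itv) (A : itv) : Prop :=
  forall eps : R, 0 < eps -> exists del : R, 0 < del /\
    forall h : R, 0 < `|h| < del -> itv_norm (gHdiff (g h) A) < eps.

Definition is_partial_gH (F : 'rV[R]_n -> itv) (xb : 'rV[R]_n) (i : 'I_n) (D : itv) : Prop :=
  itv_lim0 (fun h => itv_scale h^-1 (gHdiff (F (xb + h *: unitv i)) (F xb))) D.

(* linear IVF  L(x) = (+)_i x_i (.) L(e_i), determined by the intervals Ls i = L(e_i) *)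
Definition linIVF (Ls : 'I_n -> itv) (x : 'rV[R]_n) : itv :=
  \big[itv_add/itv0]_(i < n) itv_scale (x 0 i) (Ls i).

(* gH-differentiability at xb, for F defined on X: F(xb + d) must make sense
   for ||d|| < delta, i.e. the ball of radius delta around xb lies in X. *)
Definition gH_diff_at (X : 'rV[R]_n -> Prop) (F : 'rV[R]_n -> itv) (xb : 'rV[R]_n) : Prop :=
  exists (Ls : 'I_n -> itv) (E : 'rV[R]_n -> itv) (del : R),
    0 < del /\
    (forall d, vnorm d < del -> X (xb + d)) /\
    (forall d, vnorm d < del ->
       gHdiff (gHdiff (F (xb + d)) (F xb)) (linIVF Ls d) = itv_scale (vnorm d) (E d)) /\
    (forall eps : R, 0 < eps -> exists eta : R, 0 < eta /\
       forall d, 0 < vnorm d < eta -> itv_norm (E d) < eps).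

Definition gH_diff_on (X : 'rV[R]_n -> Prop) (F : 'rV[R]_n -> itv) : Prop :=
  forall x, X x -> gH_diff_at X F x.

Definition efficient (X : 'rV[R]_n -> Prop) (F : 'rV[R]_n -> itv) (xb : 'rV[R]_n) : Prop :=
  X xb /\ forall x, X x -> x <> xb -> ~ itv_prec (F x) (F xb).

End IVF.

(** Along the ray [xb + h e_i], the gH-difference quotient of [F] is at
    interval distance exactly [||E(h e_i)||] from [L(e_i)], so [D_i F(xb) = L(e_i)].
    If [0] lay strictly left of this interval, the quotient would have a
    positive lower end for small [h < 0]; if strictly right, a negative upper
    end for small [h > 0].  Either way [F(xb + h e_i) (-)gH F(xb)] has a
    negative upper end, i.e. [F(xb + h e_i)] strictly precedes [F(xb)],
    contradicting efficiency. *)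

From HB Require Import structures.
From mathcomp Require Import all_boot all_order all_algebra.
From mathcomp Require Import reals.
From mathcomp Require Import lra.
Import Order.TTheory GRing.Theory Num.Theory.
Local Open Scope ring_scope.

Section IntervalArithmetic.
Context {R : realType}.
Implicit Types (A B : itv R) (l : R).

Lemma itv_eta A : A = Itv (lo A) (hi A).
Proof. by case: A. Qed.

Lemma itv_norm_gHdiff A B :
  itv_norm (gHdiff A B) = Num.max `|lo A - lo B| `|hi A - hi B|.
Proof.
rewrite /itv_norm /gHdiff /=.
by case: (leP (lo A - lo B) (hi A - hi B)) => _ //; rewrite maxC.
Qed.

Lemma ler_dist_lo_gHdiff A B : `|lo A - lo B| <= itv_norm (gHdiff A B).
Proof. by rewrite itv_norm_gHdiff le_max lexx. Qed.

Lemma ler_dist_hi_gHdiff A B : `|hi A - hi B| <= itv_norm (gHdiff A B).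
Proof. by rewrite itv_norm_gHdiff le_max lexx orbT. Qed.

Lemma lo_itv_scale_neg l A : l < 0 -> lo (itv_scale l A) = l * hi A.
Proof. by move=> l_lt0; rewrite /itv_scale leNgt l_lt0. Qed.

Lemma hi_itv_scale_pos l A : 0 < l -> hi (itv_scale l A) = l * hi A.
Proof. by move=> l_gt0; rewrite /itv_scale (ltW l_gt0). Qed.

Lemma itv_normZ l A : itv_norm (itv_scale l A) = `|l| * itv_norm A.
Proof.
rewrite /itv_norm /itv_scale !maxr_pMr // -!normrM.
by case: ifP => _ //=; rewrite maxC.
Qed.

Lemma itv_norm_gHdiffZ l A B :
  itv_norm (gHdiff (itv_scale l A) (itv_scale l B)) =
  `|l| * itv_norm (gHdiff A B).
Proof.
rewrite !itv_norm_gHdiff maxr_pMr // -!normrM !mulrBr /itv_scale.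
by case: ifP => _ //=; rewrite maxC.
Qed.

Lemma itv_scaleK l A : l != 0 -> itv_scale l^-1 (itv_scale l A) = A.
Proof.
move=> l_neq0; rewrite [RHS]itv_eta /itv_scale invr_ge0.
by case: ifP => l_ge0; rewrite l_ge0 /= !(mulKf l_neq0).
Qed.

Lemma itv_prec_gHdiff_hi_lt0 A B : hi (gHdiff A B) < 0 -> itv_prec A B.
Proof.
rewrite /= gt_max !subr_lt0 => /andP[loAB hiAB].
split; [exact: ltW | split; [exact: ltW | move=> AB]].
by rewrite AB ltxx in loAB.
Qed.

Lemma lo_big_itv_add n (f : 'I_n -> itv R) :
  lo (\big[@itv_add R/itv0 R]_(j < n) f j) = \sum_(j < n) lo (f j).
Proof. exact: big_morph. Qed.

Lemma hi_big_itv_add n (f : 'I_n -> itv R) :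
  hi (\big[@itv_add R/itv0 R]_(j < n) f j) = \sum_(j < n) hi (f j).
Proof. exact: big_morph. Qed.

End IntervalArithmetic.

Section UnitVectors.
Context {R : realType} {n : nat} (i : 'I_n).

Lemma unitvZ_entry (h : R) j : (h *: unitv R i) 0 j = h * (j == i)%:R.
Proof. by rewrite !mxE. Qed.

Lemma unitv_neq0 : unitv R i != 0.
Proof.
apply/eqP => /(congr1 (fun v : 'rV[R]_n => v 0 i)) /eqP.
by rewrite !mxE eqxx oner_eq0.
Qed.

Lemma vnorm_unitvZ (h : R) : vnorm (h *: unitv R i) = `|h|.
Proof.
rewrite /vnorm (bigD1 i) //= big1 ?addr0 => [|j /negbTE ji].
  by rewrite unitvZ_entry eqxx mulr1 sqrtr_sqr.
by rewrite unitvZ_entry ji mulr0 expr0n.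
Qed.

Lemma linIVF_unitvZ (Ls : 'I_n -> itv R) (h : R) :
  linIVF Ls (h *: unitv R i) = itv_scale h (Ls i).
Proof.
have scale0 j : j != i -> itv_scale ((h *: unitv R i) 0 j) (Ls j) = itv0 R.
  by move/negbTE=> ji; rewrite unitvZ_entry ji mulr0 /itv_scale lexx !mul0r.
rewrite [LHS]itv_eta /linIVF lo_big_itv_add hi_big_itv_add.
rewrite (bigD1 i) //= big1 ?addr0 => [|j /scale0 -> //].
rewrite (bigD1 i) //= big1 ?addr0 => [|j /scale0 -> //].
by rewrite unitvZ_entry eqxx mulr1 -itv_eta.
Qed.

End UnitVectors.

Section PartialDerivative.
Context {R : realType} {n : nat} {F : 'rV[R]_n -> itv R} {xb : 'rV[R]_n}.
Context {Ls : 'I_n -> itv R} {E : 'rV[R]_n -> itv R} {del : R}.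
Hypothesis del_gt0 : 0 < del.
Hypothesis F_expand : forall d, vnorm d < del ->
  gHdiff (gHdiff (F (xb + d)) (F xb)) (linIVF Ls d) = itv_scale (vnorm d) (E d).
Hypothesis E_small : forall eps : R, 0 < eps -> exists eta : R, 0 < eta /\
  forall d, 0 < vnorm d < eta -> itv_norm (E d) < eps.
Variable i : 'I_n.

Lemma itv_norm_gH_quotient (h : R) : h != 0 -> `|h| < del ->
  itv_norm (gHdiff (itv_scale h^-1 (gHdiff (F (xb + h *: unitv R i)) (F xb))) (Ls i))
  = itv_norm (E (h *: unitv R i)).
Proof.
move=> h_neq0 h_lt.
rewrite -(itv_scaleK _ (Ls i) h_neq0) itv_norm_gHdiffZ -linIVF_unitvZ.
rewrite F_expand ?vnorm_unitvZ // itv_normZ normr_id normrV ?unitfE //.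
by rewrite mulKf ?normr_eq0.
Qed.

Lemma is_partial_gH_linIVF : is_partial_gH F xb i (Ls i).
Proof.
move=> eps eps_gt0; have [eta [eta_gt0 E_lt]] := E_small _ eps_gt0.
exists (Num.min eta del); split=> [|h /andP[h_gt0]]; first by rewrite lt_min eta_gt0.
rewrite lt_min => /andP[h_eta h_del].
rewrite itv_norm_gH_quotient -?normr_gt0 //.
by apply: E_lt; rewrite vnorm_unitvZ h_gt0.
Qed.

End PartialDerivative.

Lemma itv_lim0_at_norm {R : realType} {g : R -> itv R} {D : itv R} {eps del : R} :
  itv_lim0 g D -> 0 < eps -> 0 < del ->
  exists2 m, 0 < m < del & forall h, `|h| = m -> itv_norm (gHdiff (g h) D) < eps.
Proof.
move=> gD eps_gt0 del_gt0; have [eta [eta_gt0 g_near]] := gD eps eps_gt0.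
set m := Num.min eta del.
have m_gt0 : 0 < m by rewrite lt_min eta_gt0.
have [m_eta m_del] : m <= eta /\ m <= del by rewrite !ge_min !lexx ?orbT.
exists (m / 2); first by apply/andP; split; lra.
by move=> h hm; apply: g_near; rewrite hm; apply/andP; split; lra.
Qed.

Lemma itv_lim0_quotient_mem0 {R : realType} (G : R -> itv R) D (del : R) :
  0 < del -> (forall h, 0 < `|h| < del -> ~ hi (G h) < 0) ->
  itv_lim0 (fun h => itv_scale h^-1 (G h)) D -> itv_mem 0 D.
Proof.
move=> del_gt0 no_descent GD; split; rewrite leNgt; apply/negP.
- move=> loD_gt0.
  have [m /andP[m_gt0 m_del] near] := itv_lim0_at_norm GD loD_gt0 del_gt0.
  have norm_m : `|- m| = m by rewrite normrN gtr0_norm.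
  apply: (no_descent (- m)); first by rewrite norm_m m_gt0.
  have := le_lt_trans (ler_dist_lo_gHdiff _ _) (near _ norm_m).
  rewrite lo_itv_scale_neg ?invr_lt0 ?oppr_lt0 // invrN mulNr ltr_norml.
  move=> /andP[lo_near _].
  by rewrite -(pmulr_rlt0 _ (_ : 0 < m^-1)) ?invr_gt0 //; lra.
- move=> hiD_lt0; have mhiD_gt0 : 0 < - hi D by rewrite oppr_gt0.
  have [m /andP[m_gt0 m_del] near] := itv_lim0_at_norm GD mhiD_gt0 del_gt0.
  have norm_m : `|m| = m by rewrite gtr0_norm.
  apply: (no_descent m); first by rewrite norm_m m_gt0.
  have := le_lt_trans (ler_dist_hi_gHdiff _ _) (near _ norm_m).
  rewrite hi_itv_scale_pos ?invr_gt0 // ltr_norml.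
  move=> /andP[_ hi_near].
  by rewrite -(pmulr_rlt0 _ (_ : 0 < m^-1)) ?invr_gt0 //; lra.
Qed.

Lemma efficient_no_descent {R : realType} {n : nat} (X : 'rV[R]_n -> Prop) F xb d :
  efficient X F xb -> X (xb + d) -> d != 0 ->
  ~ hi (gHdiff (F (xb + d)) (F xb)) < 0.
Proof.
move=> [_ xb_eff] Xd d_neq0 /itv_prec_gHdiff_hi_lt0; apply: xb_eff => //.
by move/(canRL (addKr xb)); rewrite addNr; apply/eqP.
Qed.

Theorem corollary4p1 (R : realType) (n : nat) (X : 'rV[R]_n -> Prop)
    (F : 'rV[R]_n -> itv R)
    (hX : exists x, X x)
    (hF : forall x, X x -> lo (F x) <= hi (F x))
    (hdiff : gH_diff_on X F)
    (xb : 'rV[R]_n) (hxb : efficient X F xb) :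
  forall i : 'I_n, exists D : itv R, is_partial_gH F xb i D /\ itv_mem 0 D.
Proof.
move=> i; have [Ls [E [del [del_gt0 [ball [F_expand E_small]]]]]] := hdiff xb hxb.1.
have DiF := is_partial_gH_linIVF del_gt0 F_expand E_small i.
exists (Ls i); split => //; apply: itv_lim0_quotient_mem0 del_gt0 _ DiF.
move=> h /andP[h_gt0 h_del]; apply: efficient_no_descent hxb _ _.
- by apply: ball; rewrite vnorm_unitvZ.
- by rewrite scaler_eq0 negb_or -normr_gt0 h_gt0 unitv_neq0.
Qed.
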